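(* For every integer $n\geq 1$, $$c_n(231,132 : 231)=c_n(312,213 : 312)=\begin{cases}k^2+1 & \text{if } n=2k,\\ k^2+k+1 & \text{if } n=2k+1.\end{cases}$$
   Context: $S_n$ is the symmetric group on $[n]=\{1,\dots,n\}$, and a permutation $\pi\in S_n$ is written in one-line notation $\pi=\pi_1\pi_2\cdots\pi_n$ with $\pi_i=\pi(i)$. For $\tau\in S_k$, $k\le n$, $\pi$ contains $\tau$ if there are indices $i_1<\dots<i_k$ with $\pi_{i_s}>\pi_{i_t}$ iff $\tau_s>\tau_t$ for all $1\le s<t\le k$; otherwise $\pi$ avoids $\tau$. $\pi^2$ denotes the composition $\pi\circ\pi$. For patterns $\sigma_1,\sigma_2,\rho$, $c_n(\sigma_1,\sigma_2 : \rho)$ denotes the number of permutations $\pi\in S_n$ such that $\pi$ avoids both $\sigma_1$ and $\sigma_2$ and $\pi^2$ avoids $\rho$. *)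

From mathcomp Require Import all_boot all_fingroup.
Set Implicit Arguments. Unset Strict Implicit. Unset Printing Implicit Defensive.

(* Permutations of [n] are represented as {perm 'I_n} (values shifted by -1;
   shifting does not affect pattern containment). One-line notation:
   pi_i = pi i. pi^2 = pi o pi = (pi * pi)%g. *)

Definition contains (n : nat) (pi : {perm 'I_n}) (tau : seq nat) : bool :=
  [exists f : {ffun 'I_(size tau) -> 'I_n},
    [forall s : 'I_(size tau), forall t : 'I_(size tau),
       (s < t) ==>
         ((f s < f t) &&
          ((pi (f t) < pi (f s)) == (nth 0 tau t < nth 0 tau s)))]].

Definition avoids (n : nat) (pi : {perm 'I_n}) (tau : seq nat) : bool :=
  ~~ contains pi tau.

Definition c_count (n : nat) (s1 s2 rho : seq nat) : nat :=
  #|[set pi : {perm 'I_n} |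
      [&& avoids pi s1, avoids pi s2 & avoids (pi * pi)%g rho]]|.

(* Conjugation by the longest element w0 (reverse-complement) maps the patterns 231
   and 132 to 312 and 213 and commutes with squaring; this gives the first equality.

   A permutation avoids 231 and 132 iff it is V-shaped: decreasing, then increasing.
   Let pi be V-shaped on {0, ..., n} with pi^2 avoiding 231.  If pi(n) = n we
   recurse on {0, ..., n-1}.  Otherwise put L = pi(n) < n and K = n - L: the
   V-shape forces pi(i) = n - i for i < K; a 231 in pi^2 at positions
   (0, pi^-1(0), n), resp. (K, pi^-1(0), n), shows that L < K and pi(K) = 0;
   so pi increases from 0 to L on [K, n] and is the identity shifted by K there.
   Hence the avoiders on {0, ..., n-1} are exactly the words
   (m-1, ..., t, 0, ..., t-1, m, ..., n-1) with m <= n and either m = t = 0 or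
   1 <= t <= m/2, and there are 1 + sum_(m <= n) floor(m/2) = floor(n/2) ceil(n/2) + 1
   of them. *)

From mathcomp Require Import all_boot all_fingroup zify.
Set Implicit Arguments. Unset Strict Implicit. Unset Printing Implicit Defensive.

Ltac case_ltn_ifs :=
  let no_if a := match a with context [if _ then _ else _] => fail 1 | _ => idtac end in
  repeat (match goal with
          | |- context [if ?a < ?b then _ else _] => no_if a; case: (ltnP a b) => ?
          end; cbn iota).

(* The word (m-1, m-2, ..., t, 0, 1, ..., t-1), followed by the fixed points m, m+1, ... *)
Definition vform (m t i : nat) : nat :=
  if i < m - t then m.-1 - i else if i < m then i - (m - t) else i.

(* t = 0 is reserved for the identity, since vform m 0 = vform m 1. *)
Definition vparam (m t : nat) : bool :=
  ((m == 0) && (t == 0)) || ((0 < t) && (t.*2 <= m)).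

Definition vshaped (n : nat) (F : nat -> nat) : Prop :=
  forall i j k, i < j -> j < k -> k < n -> F j < F i \/ F j < F k.

Definition sq231free (n : nat) (F : nat -> nat) : Prop :=
  forall a b c, a < b -> b < c -> c < n -> ~~ (F (F c) < F (F a) < F (F b)).

Lemma vform_inj m t : injective (vform m t).
Proof. by move=> i j; rewrite /vform; case_ltn_ifs; lia. Qed.

Lemma vform_lt m t n i : m <= n -> i < n -> vform m t i < n.
Proof. by move=> ? ?; rewrite /vform; case_ltn_ifs; lia. Qed.

Lemma vform_id m t i : m <= i -> vform m t i = i.
Proof. by move=> mi; rewrite /vform; case_ltn_ifs; lia. Qed.

Lemma vform_vshaped n m t : vparam m t -> vshaped n (vform m t).
Proof.
by move=> /orP[/andP[/eqP -> /eqP ->]|/andP[? ?]] i j k ? ? ?;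
  rewrite /vform; case_ltn_ifs; lia.
Qed.

Lemma vform_vform m t i : vparam m t ->
  vform m t (vform m t i) =
    if i < t then t.-1 - i else if i < m - t then i else if i < m then (m + m - t).-1 - i else i.
Proof. by move=> /orP[/andP[/eqP -> /eqP ->]|/andP[? ?]]; rewrite /vform; case_ltn_ifs; lia. Qed.

Lemma vform_sq231free n m t : vparam m t -> sq231free n (vform m t).
Proof.
move=> mt a b c ? ? ?; rewrite !vform_vform //.
by move: mt => /orP[/andP[/eqP -> /eqP ->]|/andP[? ?]]; case_ltn_ifs; lia.
Qed.

Lemma vform_uniq n m1 t1 m2 t2 : vparam m1 t1 -> vparam m2 t2 -> m1 <= n -> m2 <= n ->
  (forall i, i < n -> vform m1 t1 i = vform m2 t2 i) -> (m1, t1) = (m2, t2).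
Proof.
move=> /orP[/andP[/eqP -> /eqP ->]|/andP[? ?]] /orP[/andP[/eqP -> /eqP ->]|/andP[? ?]] ? ? E //.
1-2: by move: (E 0 ltac:(lia)); rewrite /vform; case_ltn_ifs; lia.
have := E 0 ltac:(lia); have := E m1.-1 ltac:(lia).
by rewrite /vform; case_ltn_ifs => // *; congr pair; lia.
Qed.

Lemma incr_gap (f : nat -> nat) a b i j :
  (forall k, a <= k -> k < b -> f k < f k.+1) -> a <= i -> i <= j -> j <= b ->
  f i + (j - i) <= f j.
Proof.
move=> f_incr ai; elim: j => [|j IHj] ij jb.
  by move: ij; rewrite leqn0 => /eqP ->; rewrite addn0.
have [-> | ne_ij] := eqVneq i j.+1; first by rewrite subnn addn0.
by have := IHj ltac:(lia) ltac:(lia); have := f_incr j ltac:(lia) ltac:(lia); lia.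
Qed.

Section LastEntryNotFixed.

Variables (n : nat) (F : nat -> nat).
Hypotheses (F_le : forall i, i <= n -> F i <= n)
           (F_inj : forall i j, i <= n -> j <= n -> F i = F j -> i = j)
           (F_surj : forall v, v <= n -> exists2 i, i <= n & F i = v)
           (F_vshaped : vshaped n.+1 F) (F_sq231free : sq231free n.+1 F)
           (F_last : F n < n).

Local Notation L := (F n).
Local Notation K := (n - F n).

Lemma vshaped_prefix i : i < K -> F i = n - i.
Proof.
elim/ltn_ind: i => i IHi iK.
have [j jn Fj] := F_surj (leq_subr i n).
have [lt_ji | lt_ij | ji] := ltngtP j i; last by move: Fj; rewrite ji.
  by move: Fj; rewrite IHi //; lia.
have jn' : j < n by rewrite ltn_neqAle jn andbT; apply/eqP => jn_eq; move: Fj; rewrite jn_eq; lia.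
have [] := F_vshaped lt_ij jn' (ltnSn n); rewrite Fj; last by lia.
move=> ltFi; have Fi := @F_le i ltac:(lia).
have := IHi (n - F i) ltac:(lia) ltac:(lia).
by rewrite subKn // => /F_inj; lia.
Qed.

Lemma above_last_in_prefix j : j <= n -> L < F j -> j < K.
Proof.
move=> jn ltLj; have Fj := F_le jn.
have := vshaped_prefix (i := n - F j) ltac:(lia).
by rewrite subKn // => /F_inj; lia.
Qed.

Lemma last_lt_prefix_size : L < K.
Proof.
have F0 : F 0 = n by rewrite vshaped_prefix ?subn0 //; lia.
have [d dn Fd] := F_surj (leq0n n).
rewrite ltnNge; apply/negP => KL.
have FLL : F L < L.
  have := F_le (ltnW F_last); have := @above_last_in_prefix L ltac:(lia).
  have : F L != L by apply/eqP => /F_inj; lia.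
  lia.
have d0 : 0 < d by move: Fd; case: d {dn} => //; rewrite F0; lia.
have dn' : d < n by rewrite ltn_neqAle dn andbT; apply/eqP => dn_eq; move: Fd; rewrite dn_eq; lia.
by have := F_sq231free d0 dn' (ltnSn n); rewrite Fd F0; lia.
Qed.

Lemma zero_after_prefix : F K = 0.
Proof.
have LK := last_lt_prefix_size.
have [d dn Fd] := F_surj (leq0n n).
have Kd : K <= d by rewrite leqNgt; apply/negP => dK; move: (vshaped_prefix dK); rewrite Fd; lia.
have [-> | ne_Kd] := eqVneq K d; first exact: Fd.
apply/eqP; apply: contraT => FK0.
have FKL : F K < L.
  have := @F_le K (leq_subr _ _); have := @above_last_in_prefix K (leq_subr _ _).
  have : F K != L by apply/eqP => /F_inj; lia.
  lia.
have dn' : d < n by rewrite ltn_neqAle dn andbT; apply/eqP => dn_eq; move: Fd; rewrite dn_eq; lia.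
have lt_Kd : K < d by rewrite ltn_neqAle ne_Kd Kd.
have := F_sq231free lt_Kd dn' (ltnSn n).
by rewrite Fd (vshaped_prefix LK) (vshaped_prefix (i := F K)) ?(vshaped_prefix (i := 0)); lia.
Qed.

Lemma vshaped_suffix i : K <= i -> i <= n -> F i = i - K.
Proof.
have FK := zero_after_prefix.
have F_incr k : K <= k -> k < n -> F k < F k.+1.
  move=> Kk kn; have [eKk | ltKk] := eqVneq K k.
    rewrite -eKk FK lt0n; apply/eqP; rewrite -FK => /F_inj; lia.
  have [] := F_vshaped (_ : K < k) (ltnSn k) kn; rewrite ?FK; lia.
move=> Ki in_.
have := incr_gap F_incr (leqnn K) Ki in_; have := incr_gap F_incr Ki in_ (leqnn n).
by rewrite FK; lia.
Qed.

Lemma last_not_fixed_vform : vparam n.+1 L.+1 /\ forall i, i <= n -> F i = vform n.+1 L.+1 i.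
Proof.
have LK := last_lt_prefix_size; split; first by rewrite /vparam; lia.
move=> i in_; rewrite /vform; case_ltn_ifs; last by lia.
  by rewrite vshaped_prefix; lia.
by rewrite vshaped_suffix; lia.
Qed.

End LastEntryNotFixed.

Lemma vshaped_sq231free_vform n F :
  (forall i, i < n -> F i < n) ->
  (forall i j, i < n -> j < n -> F i = F j -> i = j) ->
  (forall v, v < n -> exists2 i, i < n & F i = v) ->
  vshaped n F -> sq231free n F ->
  exists m t, [/\ m <= n, vparam m t & forall i, i < n -> F i = vform m t i].
Proof.
elim: n => [|n IHn] F_lt F_inj F_surj F_vshaped F_sq231free; first by exists 0, 0.
have [Fn | Fn_ne] := eqVneq (F n) n; last first.
  have [] := last_not_fixed_vform F_lt F_inj F_surj F_vshaped F_sq231free.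
    by have := F_lt n (ltnSn n); lia.
  by move=> mt F_vform; exists n.+1, (F n).+1.
have [|||||m [t [mn mt F_vform]]] := IHn.
- move=> i lt_in; have := F_lt i (ltnW lt_in).
  have : F i != n by apply/eqP => Fi; move: Fn; rewrite -Fi => /F_inj; lia.
  lia.
- by move=> i j ? ?; apply: F_inj; lia.
- move=> v lt_vn; have [j lt_jn Fj] := F_surj v (ltnW lt_vn); exists j => //.
  by rewrite ltn_neqAle -ltnS lt_jn andbT; apply/eqP => jn; move: Fj; rewrite jn Fn; lia.
- by move=> i j k ? ? ?; apply: F_vshaped; lia.
- by move=> a b c ? ? ?; apply: F_sq231free; lia.
exists m, t; split => [||i]; [lia | done | rewrite ltnS leq_eqVlt].
by case/orP=> [/eqP -> | /F_vform //]; rewrite vform_id.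
Qed.

Section PermAsNatFunction.

Variable n : nat.
Implicit Types p q : {perm 'I_n}.

Definition pfun p (i : nat) : nat :=
  if insub i is Some x then val (p x) else i.

Lemma pfunE p (x : 'I_n) : pfun p x = p x.
Proof. by rewrite /pfun valK. Qed.

Lemma pfun_out p i : n <= i -> pfun p i = i.
Proof. by move=> ni; rewrite /pfun insubN // -leqNgt. Qed.

Lemma pfun_lt p i : i < n -> pfun p i < n.
Proof. by move=> lt_in; rewrite (pfunE p (Ordinal lt_in)). Qed.

Lemma pfun_inj p i j : i < n -> j < n -> pfun p i = pfun p j -> i = j.
Proof.
move=> lt_in lt_jn; rewrite (pfunE p (Ordinal lt_in)) (pfunE p (Ordinal lt_jn)).
by move=> /val_inj /perm_inj [].
Qed.

Lemma pfun_surj p v : v < n -> exists2 i, i < n & pfun p i = v.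
Proof.
move=> lt_vn; exists ((p^-1)%g (Ordinal lt_vn)) => //.
by rewrite pfunE permKV.
Qed.

Lemma pfunM p q i : pfun (p * q) i = pfun q (pfun p i).
Proof.
have [lt_in | ni] := ltnP i n; last by rewrite !pfun_out.
by rewrite -[i]/(nat_of_ord (Ordinal lt_in)) !pfunE permM.
Qed.

Lemma contains3P p a b c :
  reflect (exists i j k, [/\ i < j, j < k, k < n &
             [&& (pfun p j < pfun p i) == (b < a), (pfun p k < pfun p i) == (c < a)
               & (pfun p k < pfun p j) == (c < b)]])
          (contains p [:: a; b; c]).
Proof.
apply: (iffP existsP) => [[f /forallP f_occ] | [i [j [k [ij jk kn occ]]]]].
  pose s0 := @Ordinal 3 0 isT; pose s1 := @Ordinal 3 1 isT; pose s2 := @Ordinal 3 2 isT.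
  have /andP[lt01 occ01] := implyP (forallP (f_occ s0) s1) isT.
  have /andP[lt02 occ02] := implyP (forallP (f_occ s0) s2) isT.
  have /andP[lt12 occ12] := implyP (forallP (f_occ s1) s2) isT.
  exists (f s0), (f s1), (f s2); rewrite !pfunE.
  by split; [done | done | exact: ltn_ord | rewrite occ01 occ02 occ12].
pose oi := Ordinal (ltn_trans ij (ltn_trans jk kn)).
pose oj := Ordinal (ltn_trans jk kn); pose ok := Ordinal kn.
exists [ffun s : 'I_3 => nth ok [:: oi; oj; ok] s].
apply/forallP => s; apply/forallP => t; apply/implyP; rewrite !ffunE.
move: occ; rewrite -[i]/(val oi) -[j]/(val oj) -[k]/(val ok) !pfunE => /and3P[? ? ?].
case: s t => [[|[|[|?]]] ?] [[|[|[|?]]] ?] //= _; apply/andP; split => //.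
exact: ltn_trans ij jk.
Qed.

Lemma eq_pfun p i j : i < n -> j < n -> (pfun p i == pfun p j) = (i == j).
Proof. by move=> lt_in lt_jn; apply/eqP/eqP => [/pfun_inj | ->]; auto. Qed.

Lemma vshapedP p :
  reflect (vshaped n (pfun p)) (avoids p [:: 2; 3; 1] && avoids p [:: 1; 3; 2]).
Proof.
apply: (iffP idP) => [/andP[/contains3P no231 /contains3P no132] i j k ij jk kn | F_vshaped].
  have [|ij'] := ltnP (pfun p j) (pfun p i); first by left.
  have [|kj'] := ltnP (pfun p j) (pfun p k); first by right.
  have [lt_in lt_jn] : i < n /\ j < n by split; lia.
  move: (eq_pfun p lt_in lt_jn) (eq_pfun p kn lt_jn) (eq_pfun p lt_in kn).
  by case: (ltnP (pfun p k) (pfun p i)) => * ; [case: no231 | case: no132];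
    exists i, j, k; split => //=; lia.
by apply/andP; split; apply/contains3P => -[i [j [k [ij jk kn /=]]]];
  have := F_vshaped _ _ _ ij jk kn; lia.
Qed.

Lemma sq231freeP p : reflect (sq231free n (pfun p)) (avoids (p * p) [:: 2; 3; 1]).
Proof.
apply: (iffP idP) => [/contains3P no231 a b c ab bc cn | F_free].
  by apply/negP => occ; apply: no231; exists a, b, c; split => //=; rewrite !pfunM; lia.
apply/contains3P => -[i [j [k [ij jk kn /=]]]]; rewrite !pfunM.
have [lt_in lt_jn] : i < n /\ j < n by split; lia.
have := eq_pfun p (pfun_lt p lt_in) (pfun_lt p lt_jn); rewrite (eq_pfun p lt_in lt_jn).
by have := F_free _ _ _ ij jk kn; lia.
Qed.

End PermAsNatFunction.

Section ReverseComplement.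

Variable n : nat.
Implicit Types p q : {perm 'I_n}.

Definition revcompl p : {perm 'I_n} :=
  let w0 := perm (@rev_ord_inj n) in (w0 * p * w0)%g.

Lemma revcomplE p (x : 'I_n) : revcompl p x = rev_ord (p (rev_ord x)).
Proof. by rewrite !permM !permE. Qed.

Lemma revcomplK : involutive revcompl.
Proof. by move=> p; apply/permP => x; rewrite !revcomplE !rev_ordK. Qed.

Lemma revcomplM p q : revcompl (p * q) = (revcompl p * revcompl q)%g.
Proof. by apply/permP => x; rewrite permM !revcomplE permM rev_ordK. Qed.

Lemma pfun_revcompl p i : i < n -> pfun (revcompl p) i = n.-1 - pfun p (n.-1 - i).
Proof.
move=> lt_in; have lt_rn : n.-1 - i < n by lia.
change (pfun (revcompl p) (Ordinal lt_in) = n.-1 - pfun p (Ordinal lt_rn)).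
rewrite !pfunE revcomplE.
have -> : rev_ord (Ordinal lt_in) = Ordinal lt_rn by apply/val_inj => /=; lia.
by rewrite /=; lia.
Qed.

Lemma contains_revcompl p a b c a' b' c' :
  (b' < a') = (c < b) -> (c' < a') = (c < a) -> (c' < b') = (b < a) ->
  contains (revcompl p) [:: a; b; c] = contains p [:: a'; b'; c'].
Proof.
suff imp q x y z x' y' z' : (y' < x') = (z < y) -> (z' < x') = (z < x) -> (z' < y') = (y < x) ->
    contains (revcompl q) [:: x; y; z] -> contains q [:: x'; y'; z'].
  move=> E1 E2 E3; apply/idP/idP; first exact: imp.
  by rewrite -{1}[p]revcomplK; apply: imp.
move=> E1 E2 E3 /contains3P[i [j [k [ij jk kn]]]].
rewrite !pfun_revcompl ?(ltn_trans ij (ltn_trans jk kn)) ?(ltn_trans jk kn) // => occ.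
have [lt_i lt_j lt_k] : [/\ n.-1 - i < n, n.-1 - j < n & n.-1 - k < n] by split; lia.
move: (pfun_lt q lt_i) (pfun_lt q lt_j) (pfun_lt q lt_k) => *.
apply/contains3P; exists (n.-1 - k), (n.-1 - j), (n.-1 - i).
by rewrite E1 E2 E3; split; lia.
Qed.

End ReverseComplement.

Lemma c_count_revcompl n :
  c_count n [:: 2; 3; 1] [:: 1; 3; 2] [:: 2; 3; 1] =
    c_count n [:: 3; 1; 2] [:: 2; 1; 3] [:: 3; 1; 2].
Proof.
rewrite /c_count -(card_imset _ (can_inj (@revcomplK n))) (can_imset_pre _ (@revcomplK n)).
apply: eq_card => p; rewrite !inE /avoids -revcomplM.
by rewrite !(@contains_revcompl _ _ 2 3 1 3 1 2) // (@contains_revcompl _ _ 1 3 2 2 1 3).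
Qed.

Lemma sum_vparam m k : \sum_(t < k.+1) vparam m t = (m == 0) + minn m./2 k.
Proof.
elim: k => [|k IHk]; first by rewrite big_ord1 /vparam; case: m.
rewrite big_ord_recr /= IHk /vparam /=.
by have := odd_double_half m; case: (odd m) => /=; lia.
Qed.

Lemma sum_half k : \sum_(m < k.+1) m./2 = k./2 * uphalf k.
Proof.
elim: k => [|k IHk]; first by rewrite big_ord1.
by rewrite big_ord_recr /= IHk mulnSr mulnC.
Qed.

Section VPerm.

Variable n : nat.

Definition vparams := [set q : 'I_n.+1 * 'I_n.+1 | vparam q.1 q.2].

Definition vform_ord (m : 'I_n.+1) (t : nat) (x : 'I_n) : 'I_n := insubd x (vform m t x).

Lemma vform_ordE (m : 'I_n.+1) t x : val (vform_ord m t x) = vform m t x.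
Proof. by rewrite val_insubd vform_lt // -ltnS. Qed.

Lemma vform_ord_inj m t : injective (vform_ord m t).
Proof. by move=> x y /(congr1 val); rewrite !vform_ordE => /vform_inj /val_inj. Qed.

Definition vperm (q : 'I_n.+1 * 'I_n.+1) : {perm 'I_n} := perm (@vform_ord_inj q.1 q.2).

Lemma pfun_vperm q i : pfun (vperm q) i = vform q.1 q.2 i.
Proof.
have [lt_in | ni] := ltnP i n; last by rewrite pfun_out // vform_id // (leq_trans _ ni) // -ltnS.
by rewrite -[i]/(nat_of_ord (Ordinal lt_in)) pfunE permE vform_ordE.
Qed.

Lemma vperm_inj : {in vparams &, injective vperm}.
Proof.
move=> [m1 t1] [m2 t2]; rewrite !inE /= => mt1 mt2 eq_vperm.
have agree i : i < n -> vform m1 t1 i = vform m2 t2 i.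
  by move=> _; rewrite -(pfun_vperm (m1, t1)) -(pfun_vperm (m2, t2)) eq_vperm.
by case: (vform_uniq mt1 mt2 (ltn_ord m1) (ltn_ord m2) agree) => /val_inj -> /val_inj ->.
Qed.

Lemma avoiders_vperm :
  [set p : {perm 'I_n} | [&& avoids p [:: 2; 3; 1], avoids p [:: 1; 3; 2]
                           & avoids (p * p)%g [:: 2; 3; 1]]] = vperm @: vparams.
Proof.
apply/setP => p; rewrite inE andbA; apply/idP/imsetP.
  case/andP=> /vshapedP F_vshaped /sq231freeP F_sq231free.
  have [m [t [mn mt F_vform]]] := vshaped_sq231free_vform
    (@pfun_lt _ p) (@pfun_inj _ p) (@pfun_surj _ p) F_vshaped F_sq231free.
  have tn : t <= n by move: mt; rewrite /vparam; lia.
  exists (inord m, inord t); first by rewrite inE /= !inordK.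
  apply/permP => x; apply/val_inj; rewrite /= -!pfunE pfun_vperm /= !inordK //.
  exact: F_vform.
case=> q; rewrite inE => mt ->; apply/andP; split.
  by apply/vshapedP => i j k; rewrite !pfun_vperm; apply: vform_vshaped.
by apply/sq231freeP => a b c; rewrite !pfun_vperm; apply: vform_sq231free.
Qed.

Lemma card_vparams : #|vparams| = n./2 * uphalf n + 1.
Proof.
have -> : #|vparams| = \sum_(m < n.+1) \sum_(t < n.+1) vparam m t.
  rewrite pair_big -sum1_card big_mkcond /=.
  by apply: eq_bigr => q _; rewrite inE; case: vparam.
have row (m : 'I_n.+1) : \sum_(t < n.+1) vparam m t = (m == 0 :> nat) + m./2.
  rewrite sum_vparam; congr (_ + _); apply/minn_idPl.
  by rewrite leq_half_double; have := ltn_ord m; lia.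
rewrite (eq_bigr _ (fun m _ => row m)) big_split /= sum_half addnC.
by rewrite big_ord_recl /= big1.
Qed.

End VPerm.

Theorem theorem3p3 (n : nat) : 1 <= n ->
  c_count n [:: 2; 3; 1] [:: 1; 3; 2] [:: 2; 3; 1] =
    c_count n [:: 3; 1; 2] [:: 2; 1; 3] [:: 3; 1; 2] /\
  c_count n [:: 2; 3; 1] [:: 1; 3; 2] [:: 2; 3; 1] =
    (if odd n then (n./2) ^ 2 + n./2 + 1 else (n./2) ^ 2 + 1).
Proof.
(* The count also holds for n = 0. *)
move=> _; split; first exact: c_count_revcompl.
rewrite /c_count avoiders_vperm (card_in_imset (@vperm_inj n)) card_vparams uphalf_half.
by case: (odd n); nia.
Qed.
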